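(* Let $\mathcal M$ be a special local Moufang set with basis $(0,\infty)$ such that $U_\infty$ is abelian, and let $n\ge1$. If for every unit $x$ and every $1\le k\le n$ the point $x\cdot k$ is a unit, then $U_\infty$ is uniquely $k$-divisible for every $1\le k\le n$, i.e. every $u\in U_\infty$ has a unique $v\in U_\infty$ with $v^k=u$.
   Context: Group actions are right actions; $g^h=h^{-1}gh$. For $(X,\sim)$, $\overline x$ is the class of $x$, $\overline X$ the set of classes, $\mathrm{Sym}(X,\sim)$ the bijections $g$ with $x\sim y\iff xg\sim yg$, $\overline U$ the induced group on $\overline X$. A local Moufang set is $(X,\sim)$ with $|\overline X|>2$ and subgroups $U_x\le\mathrm{Sym}(X,\sim)$ ($x\in X$) with: (LM0) $x\sim y\Rightarrow\overline{U_x}=\overline{U_y}$; (LM1) $U_x$ fixes $x$ and is sharply transitive on $X\setminus\overline x$; (LM1') $\overline{U_x}$ fixes $\overline x$ and is sharply transitive on $\overline X\setminus\{\overline x\}$; (LM2) $U_x^g=U_{xg}$ for all $x$ and all $g\in\langle U_y\rangle$. Fix a basis $(0,\infty)$, $0\not\sim\infty$. For $x\not\sim\infty$: $\alpha_x$ is the unique element of $U_\infty$ with $0\alpha_x=x$, $-x:=0\alpha_x^{-1}$, and $x\cdot k:=0\alpha_x^k$. A unit is $x$ with $x\not\sim0,\infty$; $\mu_x$ is the unique element of $U_0\alpha_xU_0$ interchanging $0$ and $\infty$. $\mathcal M$ is special if $\big(-(x\tau^{-1})\big)\tau=-x$ for all units $x$, where $\tau=\mu_e$ for some (equivalently any) unit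 $e$. *)

(* Local Moufang sets, with group elements represented as
   functions X -> X acting on the right: the image x g is written (g x),
   and the product g h (first g, then h) is the composition (fun x => h (g x)). *)
From Stdlib Require Import Arith Lia.

Section LM.
Variable X : Type.
Variable sim : X -> X -> Prop.
Variable U : X -> (X -> X) -> Prop.

Definition cancelf (f g : X -> X) : Prop := forall x, g (f x) = x.

Definition bijective_map (f : X -> X) : Prop :=
  exists g, cancelf f g /\ cancelf g f.

Definition in_Sym (f : X -> X) : Prop :=
  bijective_map f /\ (forall x y, sim x y <-> sim (f x) (f y)).

Inductive gen_group : (X -> X) -> Prop :=
  | gen_id : gen_group (fun x => x)
  | gen_U : forall y f, U y f -> gen_group f
  | gen_mul : forall f g, gen_group f -> gen_group g -> gen_group (fun x => g (f x))
  | gen_inv : forall f g, gen_group f -> cancelf f g -> cancelf g f -> gen_group g.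

Record IsLocalMoufangSet : Prop := {
  lm_equiv_refl : forall x, sim x x;
  lm_equiv_sym : forall x y, sim x y -> sim y x;
  lm_equiv_trans : forall x y z, sim x y -> sim y z -> sim x z;
  lm_three_classes : exists a b c, ~ sim a b /\ ~ sim a c /\ ~ sim b c;
  lm_sub_id : forall x, U x (fun y => y);
  lm_sub_mul : forall x f g, U x f -> U x g -> U x (fun y => g (f y));
  lm_sub_inv : forall x f, U x f -> exists g, U x g /\ cancelf f g /\ cancelf g f;
  lm_sub_Sym : forall x f, U x f -> in_Sym f;
  (* (LM0): x ~ y implies the induced groups on X/~ coincide *)
  lm_LM0 : forall x y, sim x y ->
     (forall g, U x g -> exists h, U y h /\ forall w, sim (g w) (h w)) /\
     (forall h, U y h -> exists g, U x g /\ forall w, sim (g w) (h w));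
  lm_LM1_fix : forall x g, U x g -> g x = x;
  lm_LM1_trans : forall x y z, ~ sim y x -> ~ sim z x -> exists g, U x g /\ g y = z;
  lm_LM1_sharp : forall x y g h, ~ sim y x -> U x g -> U x h -> g y = h y -> g = h;
  lm_LM1'_fix : forall x g, U x g -> sim (g x) x;
  lm_LM1'_trans : forall x y z, ~ sim y x -> ~ sim z x ->
     exists g, U x g /\ sim (g y) z;
  lm_LM1'_sharp : forall x y g h, ~ sim y x -> U x g -> U x h ->
     sim (g y) (h y) -> forall w, sim (g w) (h w);
  (* (LM2): U_x^g = U_{xg} for g in <U_y : y>, where h^g = g^-1 h g *)
  lm_LM2 : forall x g ginv, gen_group g -> cancelf g ginv -> cancelf ginv g ->
     forall h, U x h <-> U (g x) (fun y => g (h (ginv y)))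
}.

Section Basis.
Variables zero inf : X.

Definition is_alpha (x : X) (a : X -> X) : Prop := U inf a /\ a zero = x.

(* m = -x = 0 alpha_x^{-1} *)
Definition is_minus (x m : X) : Prop := exists a, is_alpha x a /\ a m = zero.

Definition is_unit (x : X) : Prop := ~ sim x zero /\ ~ sim x inf.

Definition is_mu (x : X) (t : X -> X) : Prop :=
  (exists b c a, U zero b /\ U zero c /\ is_alpha x a /\
     t = (fun y => c (a (b y)))) /\ t zero = inf /\ t inf = zero.

(* special: (-(x tau^-1)) tau = -x for all units x, tau = mu_e *)
Definition is_special : Prop :=
  exists e, is_unit e /\ exists t, is_mu e t /\
    forall x y, is_unit x -> t y = x ->
      forall mx my, is_minus x mx -> is_minus y my -> t my = mx.
End Basis.

Definition abelian_group (P : (X -> X) -> Prop) : Prop :=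
  forall f g, P f -> P g -> (fun y => g (f y)) = (fun y => f (g y)).

Definition uniquely_divisible (P : (X -> X) -> Prop) (k : nat) : Prop :=
  forall u, P u -> exists! v, P v /\ (fun y => Nat.iter k v y) = u.

End LM.

From Stdlib Require Import Arith Lia Classical FunctionalExtensionality.

(* Write x~ for x tau.  The core is the identity ((x.k)~).k = x~ for units x
   and 1 <= k <= n, i.e. alpha_{(x.k)~}^k = alpha_{x~}, proved by induction on k.
   For a unit v and b = alpha_{v~}, the map P = b^-1 tau^-1 alpha_v tau b^-1 tau^-1
   fixes 0 (this is where speciality enters) and infinity, so by (LM2) it
   normalises U_inf and conjugates b to alpha_v^-1; evaluating at 0 b^k factors
   alpha_{v~} and drives the induction.  Hence an element of U_inf moving 0 to a
   unit is a k-th power, and is determined by its k-th power among such elements.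
   Every element of U_inf is a product of at most two of them (use alpha_e), and an
   element d with d^k = 1 either moves 0 to a unit x with x.k = 0, or d alpha_e
   and alpha_e have the same k-th power; as U_inf is abelian, k-th roots exist
   and are unique. *)

Lemma iter_mul {A} (f : A -> A) p q x :
  Nat.iter (p * q) f x = Nat.iter p (Nat.iter q f) x.
Proof.
  induction p as [|p IHp]; [reflexivity|].
  cbn [Nat.mul Nat.iter]. now rewrite Nat.iter_add, IHp.
Qed.

Lemma iter_iter_comm {A} (f : A -> A) p q x :
  Nat.iter p (Nat.iter q f) x = Nat.iter q (Nat.iter p f) x.
Proof. now rewrite <- !iter_mul, Nat.mul_comm. Qed.

Lemma iter_comp_comm {A} (f g : A -> A) :
  (forall x, f (g x) = g (f x)) ->
  forall k x, Nat.iter k (fun y => f (g y)) x = Nat.iter k f (Nat.iter k g x).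
Proof.
  intros Hfg k; induction k as [|k IHk]; intro x; [reflexivity|].
  rewrite !Nat.iter_succ, IHk. f_equal.
  apply Nat.iter_swap_gen. intro y. now rewrite Hfg.
Qed.

Lemma iter_cancel {A} (f g : A -> A) :
  (forall x, f (g x) = x) -> forall k x, Nat.iter k f (Nat.iter k g x) = x.
Proof.
  intros Hfg k; induction k as [|k IHk]; intro x; [reflexivity|].
  now rewrite Nat.iter_succ_r, Nat.iter_succ, Hfg, IHk.
Qed.

Ltac gen_group_comp :=
  repeat first
    [ assumption
    | eapply gen_U; eassumption
    | apply gen_id
    | match goal with
      |- gen_group _ _ (fun z => ?g (@?f z)) => apply (gen_mul _ _ f g)
      end ].

Section LocalMoufangSet.
Variables (X : Type) (sim : X -> X -> Prop) (U : X -> (X -> X) -> Prop).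
Hypothesis HLM : IsLocalMoufangSet X sim U.

Lemma root_group_iter x f k : U x f -> U x (Nat.iter k f).
Proof.
  intro Hf; induction k as [|k IHk]; cbn.
  - apply (lm_sub_id _ _ _ HLM).
  - exact (lm_sub_mul _ _ _ HLM x (Nat.iter k f) f IHk Hf).
Qed.

Lemma root_group_sim x f : U x f -> forall a b, sim a b <-> sim (f a) (f b).
Proof. intro Hf. exact (proj2 (lm_sub_Sym _ _ _ HLM _ _ Hf)). Qed.

Lemma root_group_surj x f : U x f -> forall z, exists y, f y = z.
Proof.
  intros Hf z. destruct (lm_sub_inv _ _ _ HLM _ _ Hf) as [g [_ [_ Hgf]]].
  exists (g z). apply Hgf.
Qed.

Lemma gen_group_sim f : gen_group X U f -> forall a b, sim a b <-> sim (f a) (f b).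
Proof.
  induction 1 as [| y f Hf | f g _ IHf _ IHg | f g _ IHf Hfg Hgf]; intros a b.
  - reflexivity.
  - now apply (root_group_sim y).
  - now rewrite IHf, IHg.
  - now rewrite (IHf (g a) (g b)), !Hgf.
Qed.

Lemma mu_invertible zero inf x t :
  is_mu X U zero inf x t -> gen_group X U t /\ exists s, cancelf X t s /\ cancelf X s t.
Proof.
  intros [[b [c [a [Hb [Hc [[Ha _] ->]]]]]] _].
  destruct (lm_sub_inv _ _ _ HLM _ _ Hb) as [bi [_ [Hb1 Hb2]]].
  destruct (lm_sub_inv _ _ _ HLM _ _ Hc) as [ci [_ [Hc1 Hc2]]].
  destruct (lm_sub_inv _ _ _ HLM _ _ Ha) as [ai [_ [Ha1 Ha2]]].
  split; [gen_group_comp|].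
  exists (fun y => bi (ai (ci y))). split; intro y.
  - now rewrite Hc1, Ha1, Hb1.
  - now rewrite Hb2, Ha2, Hc2.
Qed.

Section Basis.
Variables zero inf : X.
Hypothesis Hbasis : ~ sim zero inf.

Local Notation unit := (is_unit X sim zero inf).

Lemma root_eq_at_zero g h : U inf g -> U inf h -> g zero = h zero -> g = h.
Proof. intros. eapply (lm_LM1_sharp _ _ _ HLM inf zero); eauto. Qed.

Lemma alpha_exists p : ~ sim p inf -> exists a, U inf a /\ a zero = p.
Proof. intro Hp. destruct (lm_LM1_trans _ _ _ HLM inf zero p Hbasis Hp) as [a Ha]; eauto. Qed.

Lemma root_zero_not_inf f : U inf f -> ~ sim (f zero) inf.
Proof.
  intros Hf Hs. apply Hbasis.
  apply (root_group_sim inf f Hf).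
  now rewrite (lm_LM1_fix _ _ _ HLM _ _ Hf).
Qed.

Lemma root_sim_zero_fixes_classes d : U inf d -> sim (d zero) zero -> forall w, sim (d w) w.
Proof.
  intros Hd Hs.
  exact (lm_LM1'_sharp _ _ _ HLM inf zero d (fun y => y) Hbasis Hd (lm_sub_id _ _ _ HLM inf) Hs).
Qed.

Lemma unit_sim x y : unit x -> sim y x -> unit y.
Proof.
  intros [Hx0 Hxinf] Hyx. pose proof (lm_equiv_sym _ _ _ HLM _ _ Hyx) as Hxy.
  split; intro Hy; [apply Hx0 | apply Hxinf]; exact (lm_equiv_trans _ _ _ HLM _ _ _ Hxy Hy).
Qed.

Lemma unit_or_sim_zero p : ~ sim p inf -> unit p \/ sim p zero.
Proof.
  intro Hp. destruct (classic (sim p zero)) as [H | H]; [now right | left; now split].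
Qed.

Lemma unit_opp a p : U inf a -> unit (a zero) -> a p = zero -> unit p.
Proof.
  intros Ha [Ha0 Hainf] Hap. split; intro Hs; apply (root_group_sim inf a Ha) in Hs.
  - apply Ha0. rewrite Hap in Hs. now apply (lm_equiv_sym _ _ _ HLM).
  - apply Hbasis. now rewrite Hap, (lm_LM1_fix _ _ _ HLM _ _ Ha) in Hs.
Qed.

Hypothesis Habel : abelian_group X (U inf).

Lemma root_comm f g : U inf f -> U inf g -> forall y, f (g y) = g (f y).
Proof. intros Hf Hg y. exact (f_equal (fun F => F y) (Habel g f Hg Hf)). Qed.

Lemma root_iter_comp f g k : U inf f -> U inf g ->
  Nat.iter k (fun z => f (g z)) = (fun z => Nat.iter k f (Nat.iter k g z)).
Proof.
  intros Hf Hg. apply functional_extensionality.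
  apply iter_comp_comm, root_comm; assumption.
Qed.

Section Tau.
Variables t s : X -> X.
Hypothesis Ht : gen_group X U t.
Hypothesis Hst : forall y, s (t y) = y.
Hypothesis Hts : forall y, t (s y) = y.
Hypothesis Ht0 : t zero = inf.
Hypothesis Htinf : t inf = zero.
Hypothesis Hspecial : forall x y, unit x -> t y = x -> forall mx my,
  is_minus X U zero inf x mx -> is_minus X U zero inf y my -> t my = mx.

Lemma s_zero : s zero = inf.
Proof. now rewrite <- Htinf, Hst. Qed.

Lemma s_inf : s inf = zero.
Proof. now rewrite <- Ht0, Hst. Qed.

Lemma unit_t y : unit y -> unit (t y).
Proof.
  intros [Hy0 Hyinf]; split; intro H.
  - apply Hyinf. apply (gen_group_sim t Ht). now rewrite Htinf.
  - apply Hy0. apply (gen_group_sim t Ht). now rewrite Ht0.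
Qed.

Lemma unit_of_t y : unit (t y) -> unit y.
Proof.
  intros [Hy0 Hyinf]; split; intro H.
  - apply Hyinf. rewrite <- Ht0. exact (proj1 (gen_group_sim t Ht y zero) H).
  - apply Hy0. rewrite <- Htinf. exact (proj1 (gen_group_sim t Ht y inf) H).
Qed.

Lemma t_opp v a b p q : unit v -> U inf a -> a zero = v -> U inf b -> b zero = t v ->
  a p = zero -> b q = zero -> t p = q.
Proof.
  intros Hv Ha Hav Hb Hbv Hap Hbq.
  apply (Hspecial (t v) v); auto using unit_t.
  - now exists b.
  - now exists a.
Qed.

Lemma normaliser_intertwines P Pi g h :
  gen_group X U P -> cancelf X P Pi -> cancelf X Pi P -> P zero = zero -> P inf = inf ->
  U inf g -> U inf h -> h (P (g zero)) = zero -> forall z, h (P (g z)) = P z.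
Proof.
  intros HP HPPi HPiP HP0 HPinf Hg Hh Hh0.
  assert (Hconj : U inf (fun z => P (g (Pi z)))).
  { rewrite <- HPinf at 1. now apply (lm_LM2 _ _ _ HLM inf P Pi HP HPPi HPiP). }
  assert (E : (fun z => h (P (g (Pi z)))) = (fun z => z)).
  { apply root_eq_at_zero.
    - exact (lm_sub_mul _ _ _ HLM _ _ _ Hconj Hh).
    - apply (lm_sub_id _ _ _ HLM).
    - now rewrite <- HP0 at 1; rewrite HPPi. }
  intro z. pose proof (f_equal (fun F => F (P z)) E) as Ez. cbn beta in Ez.
  now rewrite HPPi in Ez.
Qed.

(* P below is b^-1 tau^-1 alpha_v tau b^-1 tau^-1 in right-action notation; it
   fixes 0 precisely because M is special. *)
Lemma hua_identity v a b : unit v -> U inf a -> a zero = v -> U inf b -> b zero = t v ->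
  forall k x, b x = t (a (s (Nat.iter k b zero))) -> Nat.iter (S k) a (s x) = zero.
Proof.
  intros Hv Ha Hav Hb Hbv.
  destruct (lm_sub_inv _ _ _ HLM _ _ Hb) as [bi [Hbi [Hb1 Hb2]]].
  destruct (lm_sub_inv _ _ _ HLM _ _ Ha) as [ai [_ [Ha1 Ha2]]].
  assert (Hbi_inf : bi inf = inf) by exact (lm_LM1_fix _ _ _ HLM _ _ Hbi).
  assert (Ha_inf : a inf = inf) by exact (lm_LM1_fix _ _ _ HLM _ _ Ha).
  destruct (root_group_surj _ _ Ha zero) as [p Hp].
  assert (Hminus : s (bi zero) = p).
  { rewrite <- (t_opp v a b p (bi zero)); auto. }
  set (P := fun z => s (bi (t (a (s (bi z)))))).
  set (Pi := fun z => b (t (ai (s (b (t z)))))).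
  assert (HP0 : P zero = zero).
  { unfold P. now rewrite Hminus, Hp, Ht0, Hbi_inf, s_inf. }
  assert (Hinter : forall z, a (P (b z)) = P z).
  { apply (normaliser_intertwines P Pi); [| | | exact HP0 | | exact Hb | exact Ha |].
    - pose proof (gen_inv X U t s Ht Hst Hts). unfold P. gen_group_comp.
    - intro y. unfold P, Pi. now rewrite Hts, Hb2, Hst, Ha1, Hts, Hb2.
    - intro y. unfold P, Pi. now rewrite Hb1, Hst, Ha2, Hts, Hb1, Hst.
    - unfold P. now rewrite Hbi_inf, s_inf, Hav, <- Hbv, Hb1, s_zero.
    - unfold P. now rewrite Hb1, s_zero, Ha_inf, Htinf, Hminus, Hp. }
  assert (Hiter : forall k z, Nat.iter k a (P (Nat.iter k b z)) = P z).
  { intro k; induction k as [|k IHk]; intro z; [reflexivity|].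
    now rewrite Nat.iter_succ_r, Nat.iter_succ, Hinter. }
  intros k x Hx.
  rewrite <- HP0, <- (Hiter (S k) zero). f_equal.
  unfold P. now rewrite Nat.iter_succ, Hb1, <- Hx, Hb1.
Qed.

Lemma alpha_tau_factor v a b c d m :
  unit v -> U inf a -> a zero = v -> U inf b -> b zero = t v ->
  unit (Nat.iter (S m) a zero) -> U inf d -> d zero = t (Nat.iter (S m) a zero) ->
  U inf c -> c zero = t (a (s (Nat.iter m b zero))) ->
  b = (fun z => d (c z)).
Proof.
  intros Hv Ha Hav Hb Hbv Hy Hd Hdy Hc Hc0.
  destruct (root_group_surj _ _ Hb (c zero)) as [x Hx].
  destruct (root_group_surj _ _ Hd zero) as [q Hq].
  assert (Hxq : x = q).
  { rewrite <- (Hts x).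
    apply (t_opp (Nat.iter (S m) a zero) (Nat.iter (S m) a) d); auto using root_group_iter.
    apply (hua_identity v a b Hv Ha Hav Hb Hbv m). congruence. }
  apply root_eq_at_zero; [assumption | exact (lm_sub_mul _ _ _ HLM _ _ _ Hc Hd) |].
  now rewrite <- Hx, root_comm, Hxq, Hq.
Qed.

Section Divisibility.
Variable n : nat.
Hypothesis Hunits : forall x, unit x -> forall a, is_alpha X U zero inf x a ->
  forall k, 1 <= k <= n -> unit (Nat.iter k a zero).

Lemma tau_iter_alpha k : 1 <= k <= n -> forall w a c, unit w -> U inf a -> a zero = w ->
  U inf c -> c zero = t (Nat.iter k a zero) -> Nat.iter k c zero = t w.
Proof.
  induction k as [|m IH]; intros Hk w a c Hw Ha Haw Hc Hc0; [lia|].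
  destruct (Nat.eq_dec m 0) as [-> | Hm]; [cbn in *; congruence|].
  assert (Hmn : 1 <= m <= n) by lia.
  set (v := Nat.iter m a zero).
  assert (Hv : unit v) by (apply (Hunits w); [|split|]; auto).
  destruct (alpha_exists (t v)) as [b [Hb Hb0]]; [apply unit_t, Hv|].
  assert (IHb : Nat.iter m b zero = t w) by (apply (IH Hmn w a); auto).
  set (y := Nat.iter (S m) (Nat.iter m a) zero).
  assert (Hy : unit y) by (apply (Hunits v); [|split|]; auto using root_group_iter).
  destruct (alpha_exists (t y)) as [d [Hd Hd0]]; [apply unit_t, Hy|].
  assert (Hbdc : b = (fun z => d (c z))).
  { apply (alpha_tau_factor v (Nat.iter m a) b c d m); auto using root_group_iter.
    now rewrite Hc0, IHb, Hst, <- Haw, <- Nat.iter_succ_r. }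
  assert (Hcd : c = Nat.iter m d).
  { apply root_eq_at_zero; auto using root_group_iter.
    rewrite Hc0. symmetry. apply (IH Hmn _ (Nat.iter (S m) a)); auto using root_group_iter.
    - apply (Hunits w); [|split|]; auto.
    - now rewrite Hd0, iter_iter_comm. }
  rewrite <- IHb, Hbdc, Hcd.
  change (fun z => d (Nat.iter m d z)) with (Nat.iter (S m) d).
  apply iter_iter_comm.
Qed.

Lemma unit_kth_root k u : 1 <= k <= n -> U inf u -> unit (u zero) ->
  exists r, U inf r /\ Nat.iter k r = u.
Proof.
  intros Hk Hu Hu0.
  set (w := s (u zero)).
  assert (Hw : unit w) by (apply unit_of_t; unfold w; now rewrite Hts).
  destruct (alpha_exists w) as [a [Ha Ha0]]; [apply Hw|].
  destruct (alpha_exists (t (Nat.iter k a zero))) as [r [Hr Hr0]].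
  { apply unit_t, (Hunits w); [|split|]; auto. }
  exists r. split; [assumption|].
  apply root_eq_at_zero; auto using root_group_iter.
  rewrite (tau_iter_alpha k Hk w a r); auto. unfold w. now rewrite Hts.
Qed.

Lemma unit_kth_root_unique k f g : 1 <= k <= n -> U inf f -> U inf g ->
  unit (f zero) -> unit (g zero) -> Nat.iter k f = Nat.iter k g -> f = g.
Proof.
  intros Hk Hf Hg Hf0 Hg0 E.
  destruct (alpha_exists (t (Nat.iter k f zero))) as [c [Hc Hc0]].
  { apply unit_t, (Hunits (f zero)); [|split|]; auto. }
  pose proof (tau_iter_alpha k Hk (f zero) f c Hf0 Hf eq_refl Hc Hc0) as Ef.
  rewrite E in Hc0.
  pose proof (tau_iter_alpha k Hk (g zero) g c Hg0 Hg eq_refl Hc Hc0) as Eg.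
  apply root_eq_at_zero; auto.
  rewrite <- (Hst (f zero)), <- (Hst (g zero)). congruence.
Qed.

Variable e : X.
Hypothesis He : unit e.

Lemma kth_root_exists k u : 1 <= k <= n -> U inf u -> exists r, U inf r /\ Nat.iter k r = u.
Proof.
  intros Hk Hu.
  destruct (unit_or_sim_zero (u zero)) as [Hu0 | Hu0]; [now apply root_zero_not_inf | |].
  { now apply unit_kth_root. }
  destruct (alpha_exists e) as [ae [Hae Hae0]]; [apply He|].
  destruct (lm_sub_inv _ _ _ HLM _ _ Hae) as [aei [Haei [_ Hae2]]].
  destruct (unit_kth_root k (fun z => u (ae z))) as [r1 [Hr1 E1]];
    [assumption | exact (lm_sub_mul _ _ _ HLM _ _ _ Hae Hu) | |].
  { cbn. rewrite Hae0. apply (unit_sim e); [assumption|].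
    now apply root_sim_zero_fixes_classes. }
  destruct (unit_kth_root k aei) as [r2 [Hr2 E2]]; [assumption | assumption | |].
  { apply (unit_opp ae); [assumption | now rewrite Hae0 | apply Hae2]. }
  exists (fun z => r1 (r2 z)). split; [exact (lm_sub_mul _ _ _ HLM _ _ _ Hr2 Hr1)|].
  rewrite (root_iter_comp r1 r2), E1, E2 by assumption.
  apply functional_extensionality. intro z. now rewrite Hae2.
Qed.

Lemma kth_power_kernel k d : 1 <= k <= n -> U inf d -> Nat.iter k d = (fun z => z) ->
  d = (fun z => z).
Proof.
  intros Hk Hd Hdk.
  destruct (unit_or_sim_zero (d zero)) as [Hd0 | Hd0]; [now apply root_zero_not_inf | |].
  - exfalso. pose proof (Hunits (d zero) Hd0 d (conj Hd eq_refl) k Hk) as Hu.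
    rewrite Hdk in Hu. apply (proj1 Hu), (lm_equiv_refl _ _ _ HLM).
  - destruct (alpha_exists e) as [ae [Hae Hae0]]; [apply He|].
    assert (Hdae : (fun z => d (ae z)) = ae).
    { apply (unit_kth_root_unique k); auto.
      - exact (lm_sub_mul _ _ _ HLM _ _ _ Hae Hd).
      - cbn. rewrite Hae0. apply (unit_sim e); [assumption|].
        now apply root_sim_zero_fixes_classes.
      - now rewrite Hae0.
      - now rewrite (root_iter_comp d ae), Hdk by assumption. }
    apply functional_extensionality. intro z.
    destruct (root_group_surj _ _ Hae z) as [x <-].
    exact (f_equal (fun F => F x) Hdae).
Qed.

Lemma kth_root_unique k v v' : 1 <= k <= n -> U inf v -> U inf v' ->
  Nat.iter k v = Nat.iter k v' -> v = v'.
Proof.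
  intros Hk Hv Hv' E.
  destruct (lm_sub_inv _ _ _ HLM _ _ Hv') as [vi [Hvi [Hv1 Hv2]]].
  assert (Hd : (fun z => vi (v z)) = (fun z => z)).
  { apply (kth_power_kernel k); [assumption | exact (lm_sub_mul _ _ _ HLM _ _ _ Hv Hvi) |].
    rewrite (root_iter_comp vi v), E by assumption.
    apply functional_extensionality. apply iter_cancel, Hv1. }
  apply functional_extensionality. intro y.
  rewrite <- (Hv2 (v y)). change (vi (v y)) with ((fun z => vi (v z)) y).
  now rewrite Hd.
Qed.

Lemma root_group_uniquely_divisible k : 1 <= k <= n -> uniquely_divisible X (U inf) k.
Proof.
  intros Hk u Hu.
  destruct (kth_root_exists k u Hk Hu) as [r [Hr Er]].
  exists r. split; [split; assumption|].
  intros r' [Hr' Er']. apply (kth_root_unique k); auto.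
  rewrite Er. symmetry. exact Er'.
Qed.

End Divisibility.
End Tau.
End Basis.
End LocalMoufangSet.

Theorem mainTheorem15 (X : Type) (sim : X -> X -> Prop) (U : X -> (X -> X) -> Prop)
  (HLM : IsLocalMoufangSet X sim U) (zero inf : X) (Hbasis : ~ sim zero inf)
  (Hspecial : is_special X sim U zero inf)
  (Habel : abelian_group X (U inf))
  (n : nat) (Hn : 1 <= n)
  (Hunits : forall x, is_unit X sim zero inf x ->
     forall a, is_alpha X U zero inf x a ->
     forall k, 1 <= k <= n -> is_unit X sim zero inf (Nat.iter k a zero)) :
  forall k, 1 <= k <= n -> uniquely_divisible X (U inf) k.
Proof.
  destruct Hspecial as [e [He [t [Hmu Hsp]]]].
  destruct (mu_invertible X sim U HLM zero inf e t Hmu) as [Ht [s [Hst Hts]]].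
  destruct Hmu as [_ [Ht0 Htinf]].
  exact (root_group_uniquely_divisible X sim U HLM zero inf Hbasis Habel t s Ht Hst Hts
           Ht0 Htinf Hsp n Hunits e He).
Qed.
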